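(* Let $A$ be a finite alphabet. If $\phi: A^{\mathbb{N}} \to A^{\mathbb{N}}$ $*$-commutes with the shift map $\sigma$, then $Z_k^{\phi}$ is shift invariant, i.e. $\sigma(Z_k^{\phi})=Z_k^{\phi}$, for all $k \in \mathbb{N}$.
   Context: $A$ is a finite set; $\mathbb{N}=\{1,2,3,\dots\}$; $A^{\mathbb{N}}$ is the set of one-sided infinite sequences over $A$; $\sigma(x_1x_2x_3\cdots)=x_2x_3\cdots$. Two functions $S,T: X\to X$ $*$-commute if $ST=TS$ and for every $(y,z)\in X\times X$ with $S(y)=T(z)$ there exists a unique $x\in X$ with $T(x)=y$ and $S(x)=z$. For $\phi: X\to X$ and $k\in\mathbb{N}$, $Z_k^{\phi}=\{y\in X : |\phi^{-1}(y)|=k\}$. *)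

From mathcomp Require Import all_boot.
Set Implicit Arguments. Unset Strict Implicit. Unset Printing Implicit Defensive.

(* One-sided sequences over A: x_1 x_2 x_3 ... is represented as
   fun n => x_{n+1}, i.e. index 0 of the Rocq function is the first letter. *)
Definition seqs (A : Type) := nat -> A.

Definition shift (A : Type) (x : seqs A) : seqs A := fun n => x n.+1.

Definition star_commute (X : Type) (S T : X -> X) : Prop :=
  (forall x, S (T x) = T (S x)) /\
  (forall y z, S y = T z ->
     exists x, (T x = y /\ S x = z) /\
       forall x', T x' = y /\ S x' = z -> x' = x).

Definition has_card (X : Type) (P : X -> Prop) (k : nat) : Prop :=
  exists f : 'I_k -> X, injective f /\ (forall x, P x <-> exists i, f i = x).

Definition Zk (X : Type) (phi : X -> X) (k : nat) (y : X) : Prop :=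
  has_card (fun x => phi x = y) k.

From Stdlib Require Import ClassicalEpsilon.
From mathcomp Require Import all_boot.

(* If [S] and [T] *-commute, then [T] maps the fibre [S^-1(w)] bijectively
   onto the fibre [S^-1(T w)]: commutation sends the first fibre into the
   second, and the unique-lifting property says that every point of the second
   fibre has exactly one [T]-preimage in the first.  Fibres over [w] and over
   [T w] thus have the same size, and since the shift is onto, the sets [Z_k]
   are shift invariant. *)

Section CardTransfer.

Variables (X Y : Type) (f : X -> Y) (P : X -> Prop) (Q : Y -> Prop).
Hypotheses (f_maps : forall x, P x -> Q (f x))
           (f_inj : forall x x', P x -> P x' -> f x = f x' -> x = x')
           (f_onto : forall y, Q y -> exists2 x, P x & f x = y).

Lemma has_card_image k : has_card P k -> has_card Q k.
Proof.
move=> [e [e_inj eP]]; exists (f \o e); split.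
- by move=> i j /f_inj eij; apply/e_inj/eij; apply/eP; [exists i | exists j].
- move=> y; split=> [/f_onto [x /eP [i <-] <-] | [i <-]]; first by exists i.
  by apply/f_maps/eP; exists i.
Qed.

Lemma has_card_preimage k : has_card Q k -> has_card P k.
Proof.
move=> [e [e_inj eQ]].
have [g gP] : exists g : 'I_k -> X, forall i, P (g i) /\ f (g i) = e i.
  apply: (choice (fun i x => P x /\ f x = e i)) => i.
  have [|x Px fx] := f_onto (e i); first by apply/eQ; exists i.
  by exists x.
exists g; split.
- by move=> i j gij; apply: e_inj; rewrite -(gP i).2 -(gP j).2 gij.
- move=> x; split=> [Px | [i <-]]; last exact: (gP i).1.
  have [i ei] : exists i, e i = f x by apply/eQ/f_maps.
  by exists i; apply: f_inj; [exact: (gP i).1 | done | rewrite (gP i).2].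
Qed.

End CardTransfer.

Arguments has_card_image {X Y f P Q}.
Arguments has_card_preimage {X Y f P Q}.

Section StarCommute.

Variables (X : Type) (S T : X -> X).
Hypothesis ST : star_commute S T.

Lemma star_commute_fibre_maps {w x} : S x = w -> S (T x) = T w.
Proof. by case: ST => STC _ <-; rewrite STC. Qed.

Lemma star_commute_fibre_inj w x x' :
  S x = w -> S x' = w -> T x = T x' -> x = x'.
Proof.
case: ST => _ lift Sx Sx' Txx'.
have [z [_ z_uniq]] := lift _ _ (star_commute_fibre_maps Sx).
rewrite (z_uniq x (conj erefl Sx)).
by apply/esym/z_uniq; rewrite Txx' Sx'.
Qed.

Lemma star_commute_fibre_onto w y : S y = T w -> exists2 x, S x = w & T x = y.
Proof. by case: ST => _ lift /lift [x [[Tx Sx] _]]; exists x. Qed.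

Lemma Zk_star_commute k w : Zk S k (T w) <-> Zk S k w.
Proof.
have maps := @star_commute_fibre_maps w.
have inj := star_commute_fibre_inj w.
have onto := star_commute_fibre_onto w.
split; [exact: has_card_preimage maps inj onto k
       | exact: has_card_image maps inj onto k].
Qed.

End StarCommute.

Arguments Zk_star_commute {X S T}.

Lemma shift_surj {A : Type} (y : seqs A) : exists w : seqs A, shift w = y.
Proof. by exists (fun n => if n is m.+1 then y m else y 0). Qed.

Theorem proposition5p4 (A : finType) (phi : seqs A -> seqs A) :
  star_commute phi (@shift A) ->
  forall k : nat, 0 < k ->
    forall y : seqs A,
      Zk phi k y <-> exists w : seqs A, Zk phi k w /\ shift w = y.
Proof.
move=> phi_shift k _ y; split=> [Zy | [w [Zw <-]]].
- have [w shift_w] := shift_surj y.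
  by exists w; rewrite -(Zk_star_commute phi_shift) shift_w.
- exact/(Zk_star_commute phi_shift).
Qed.
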